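(* Consider the 2D pure diffusion equation $u_t = d_{11} u_{x_1x_1} + d_{22} u_{x_2x_2} + (d_{12}+d_{21}) u_{x_1x_2}$ on the unit square $[0,1]^2$ with periodic boundary condition, where $D=(d_{ij})\in\mathbb R^{2\times2}$ is positive semi-definite and $|d_{12}+d_{21}|\le 2\gamma\sqrt{d_{11}d_{22}}$ with $\gamma\in[0,1]$. Let the semi-discrete system $u'=F_0(u)+F_1(u)+F_2(u)$ ($s=2$) be obtained by central second-order finite difference discretization on a uniform Cartesian grid with mesh-width $h$ in both directions, with $F_0$ the mixed-derivative part and $F_j$ the second-derivative part in the $x_j$-direction ($j=1,2$). Consider the two-step ($k=2$) modified stabilizing correction method $$v_0=\sum_{i=1}^2\Big(a_iu_{n-i}+\Delta t\,\hat b_iF_0(u_{n-i})+\Delta t\,\check b_i\sum_{j=1}^2F_j(u_{n-i})\Big),$$ $$v_j=v_{j-1}+\Delta t\sum_{i=1}^2(b_i-\check b_i)F_j(u_{n-i})+\Delta t\,\theta F_j(v_j)\ (j=1,2),\qquad u_n=v_2,$$ with coefficients given by one of: (CNLF) $a=(0,1)$, $b=(0,1)$, $\hat b=(2,0)$, $\check b=(1,1)$, $\theta=1$; (BDF2-type) $a=(\tfrac43,-\tfrac13)$, $b=(\tfrac43-2\theta,-\tfrac23+\theta)$, $\hat b=(\tfrac43,-\tfrac23)$, $\check b=(\tfrac43-\theta,-\tfrac23+\theta)$; (Adams2-type) $a=(1,0)$, $b=(\tfrac32-2\theta,-\tfrac12+\theta)$, $\hat b=(\tfrac32,-\tfrac12)$,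 $\check b=(\tfrac32-\theta,-\tfrac12+\theta)$. Then these three methods are unconditionally stable (in the discrete $L_2$-norm, for all $r=\Delta t/h^2>0$) for the following parameter values $\theta$: CNLF: $\theta = 1$; BDF2-type: $\theta \geq\max\left\{\frac{1}{2}, \frac{\gamma+1}{2+2/\sqrt{3}} \right\}$; Adams2-type: $\theta \geq\max\left\{\frac{1}{2}, \frac{\gamma+1}{3} \right\}$.
   Context: Stability is understood via von Neumann analysis: the matrices are normal and commuting with scaled eigenvalues $z_j=-2rd_{jj}(1-\cos\phi_j)$ ($j=1,2$), $z_0=-r(d_{12}+d_{21})\sin\phi_1\sin\phi_2$, $r=\Delta t/h^2$, $\phi_j\in[0,2\pi]$, and stability means that the characteristic polynomial $\zeta^2-r_1\zeta-r_2$ satisfies the root condition (all roots of modulus $\le1$, those of modulus one simple), where $r_i=\frac1p\big(a_i+\hat b_iz_0+\check b_i(z_1+z_2)+\frac1\theta(b_i-\check b_i)(1-p)\big)$, $p=(1-\theta z_1)(1-\theta z_2)$. Here $\theta=b_0$. *)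

From Stdlib Require Import Reals.
From Coquelicot Require Import Coquelicot.
Open Scope R_scope.

(* Scaled eigenvalues of the (normal, commuting) difference matrices. *)
Definition zj (r djj phi : R) : R := -2 * r * djj * (1 - cos phi).
Definition z0 (r d12 d21 phi1 phi2 : R) : R := - r * (d12 + d21) * sin phi1 * sin phi2.

Definition pfac (theta z1 z2 : R) : R := (1 - theta * z1) * (1 - theta * z2).
Definition rcoef (ai bi bhi bci theta z0v z1 z2 : R) : R :=
  / pfac theta z1 z2 *
  (ai + bhi * z0v + bci * (z1 + z2) + / theta * (bi - bci) * (1 - pfac theta z1 z2)).

Definition root_condition (r1 r2 : R) : Prop :=
  forall zeta : C,
    Cminus (Cminus (Cmult zeta zeta) (Cmult (RtoC r1) zeta)) (RtoC r2) = RtoC 0 ->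
    Cmod zeta <= 1 /\
    (Cmod zeta = 1 -> Cminus (Cmult (RtoC 2) zeta) (RtoC r1) <> RtoC 0).

(* Unconditional (von Neumann) stability of the two-step modified stabilizing
   correction method with coefficients a, b, bhat (bh), bcheck (bc), theta,
   applied to the 2D diffusion problem with D = (d_ij): for all r = dt/h^2 > 0
   and all phi1, phi2 in [0, 2 pi] the root condition holds. *)
Definition uncond_stable (a1 a2 b1 b2 bh1 bh2 bc1 bc2 theta : R)
    (d11 d12 d21 d22 : R) : Prop :=
  forall r phi1 phi2 : R,
    0 < r -> 0 <= phi1 <= 2 * PI -> 0 <= phi2 <= 2 * PI ->
    let z1 := zj r d11 phi1 in
    let z2 := zj r d22 phi2 in
    let z0v := z0 r d12 d21 phi1 phi2 in
    root_condition (rcoef a1 b1 bh1 bc1 theta z0v z1 z2)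
                   (rcoef a2 b2 bh2 bc2 theta z0v z1 z2).

Definition psd2 (d11 d12 d21 d22 : R) : Prop :=
  forall x y : R, 0 <= x * (d11 * x + d12 * y) + y * (d21 * x + d22 * y).

From Stdlib Require Import Reals Lra Psatz.
From Coquelicot Require Import Coquelicot.
Open Scope R_scope.

(* By the Schur-Cohn criterion, zeta^2 - r1 zeta - r2 satisfies the root condition
   as soon as -1 < r2 and |r1| <= 1 - r2.  Writing r_i = N_i / p with
   p = (1 - theta z1)(1 - theta z2) > 0, this becomes three linear inequalities
   between the numerators and p, which only involve x = z1 + z2 <= 0,
   s = sqrt (z1 z2) <= -x/2 and the mixed symbol |z0| <= 2 gamma s.  Each of them
   is a sum of nonnegative terms except the last one for the BDF2 and Adams2
   schemes, where the lower bound on theta makes the defect a perfect square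
   in theta s. *)

Lemma real_root_le_1 (r1 r2 a : R) :
  -1 < r2 -> r1 + r2 <= 1 -> r2 - r1 <= 1 -> a * a - r1 * a - r2 = 0 ->
  a * a <= 1 /\ (a * a = 1 -> r1 <> 2 * a).
Proof.
  intros Hr2 Hplus Hminus Ha.
  (* a' is the other root, so the quadratic at 1 and -1 equals (1 -+ a)(1 -+ a'). *)
  set (a' := r1 - a).
  assert (Hat1 : (1 - a) * (1 - a') = 1 - r1 - r2) by (unfold a'; nra).
  assert (Hatm1 : (1 + a) * (1 + a') = 1 + r1 - r2) by (unfold a'; nra).
  assert (Hprod : a * a' = - r2) by (unfold a'; nra).
  split.
  - destruct (Rle_dec (a * a) 1) as [|Hgt]; [assumption | exfalso].
    destruct (Rle_dec a 0).
    + assert (a < -1) by nra. assert (a' <= -1) by nra. nra.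
    + assert (1 < a) by nra. assert (1 <= a') by nra. nra.
  - intros Ha1 Hr1. rewrite Hr1 in Ha. nra.
Qed.

Lemma root_condition_of_bounds (r1 r2 : R) :
  -1 < r2 -> r1 + r2 <= 1 -> r2 - r1 <= 1 -> root_condition r1 r2.
Proof.
  intros Hr2 Hplus Hminus [a b] Heq.
  unfold Cminus, Cmult, Cplus, Copp, RtoC in Heq; simpl in Heq.
  injection Heq as Hre Him.
  assert (Hmod2 := Cmod2_alt (a, b)); simpl in Hmod2.
  assert (Hmod0 := Cmod_ge_0 (a, b)).
  destruct (Req_dec b 0) as [-> | Hb].
  - destruct (real_root_le_1 r1 r2 a) as [Ha1 Hsimple]; [lra .. | nra |].
    split; [nra |].
    intros Hmod1 Hderiv. injection Hderiv as Hderiv _.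
    apply Hsimple; nra.
  - assert (Hr1 : r1 = 2 * a).
    { assert (Hfac : b * (2 * a - r1) = 0) by nra.
      destruct (Rmult_integral _ _ Hfac); [contradiction | lra]. }
    assert (a ^ 2 + b ^ 2 < 1) by nra.
    split; [nra | intros; nra].
Qed.

Lemma root_condition_scaled (p N1 N2 : R) :
  0 < p -> - p < N2 -> N1 + N2 <= p -> N2 - N1 <= p ->
  root_condition (/ p * N1) (/ p * N2).
Proof.
  intros Hp H2 Hplus Hminus.
  assert (Hinv : 0 < / p) by (apply Rinv_0_lt_compat; lra).
  assert (Hpp : / p * p = 1) by (field; lra).
  apply root_condition_of_bounds; nra.
Qed.

Definition numerator (a b bh bc theta w z1 z2 : R) : R :=
  a + bh * w + b * (z1 + z2) - (b - bc) * theta * (z1 * z2).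

Lemma rcoef_numerator (a b bh bc theta w z1 z2 : R) : theta <> 0 ->
  rcoef a b bh bc theta w z1 z2 = / pfac theta z1 z2 * numerator a b bh bc theta w z1 z2.
Proof.
  intros Htheta. unfold rcoef, numerator. f_equal. unfold pfac. field. exact Htheta.
Qed.

Lemma pfac_expand (theta z1 z2 : R) :
  pfac theta z1 z2 = 1 - theta * (z1 + z2) + theta ^ 2 * (z1 * z2).
Proof. unfold pfac. ring. Qed.

Lemma pfac_pos (theta z1 z2 : R) :
  0 <= theta -> z1 <= 0 -> z2 <= 0 -> 0 < pfac theta z1 z2.
Proof. intros Htheta H1 H2. unfold pfac. apply Rmult_lt_0_compat; nra. Qed.

Lemma root_condition_of_numerators (a1 a2 b1 b2 bh1 bh2 bc1 bc2 theta w z1 z2 : R) :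
  0 < theta -> z1 <= 0 -> z2 <= 0 ->
  let p := pfac theta z1 z2 in
  let N1 := numerator a1 b1 bh1 bc1 theta w z1 z2 in
  let N2 := numerator a2 b2 bh2 bc2 theta w z1 z2 in
  - p < N2 -> N1 + N2 <= p -> N2 - N1 <= p ->
  root_condition (rcoef a1 b1 bh1 bc1 theta w z1 z2) (rcoef a2 b2 bh2 bc2 theta w z1 z2).
Proof.
  intros Htheta H1 H2 p N1 N2 Hlow Hplus Hminus.
  rewrite !rcoef_numerator by lra.
  apply root_condition_scaled; [apply pfac_pos; lra | assumption ..].
Qed.

Lemma psd2_diag_nonneg (d11 d12 d21 d22 : R) :
  psd2 d11 d12 d21 d22 -> 0 <= d11 /\ 0 <= d22.
Proof.
  intros Hpsd. split; [generalize (Hpsd 1 0) | generalize (Hpsd 0 1)]; lra.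
Qed.

Lemma zj_nonpos (r d phi : R) : 0 <= r -> 0 <= d -> zj r d phi <= 0.
Proof.
  intros Hr Hd. unfold zj.
  assert (Hcos := COS_bound phi).
  assert (0 <= r * d * (1 - cos phi)) by (apply Rmult_le_pos; nra).
  lra.
Qed.

Lemma sin_sqr_le (phi : R) : sin phi ^ 2 <= 2 * (1 - cos phi).
Proof.
  assert (Hcos := COS_bound phi). assert (Hpyth := sin2_cos2 phi).
  unfold Rsqr in Hpyth. nra.
Qed.

Lemma mixed_coef_sqr_le (d11 d22 e gamma : R) :
  0 <= gamma -> 0 <= d11 * d22 -> Rabs e <= 2 * gamma * sqrt (d11 * d22) ->
  e ^ 2 <= 4 * gamma ^ 2 * (d11 * d22).
Proof.
  intros Hgamma Hd He.
  assert (Hsqrt := sqrt_sqrt _ Hd). assert (Hsqrt0 := sqrt_pos (d11 * d22)).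
  assert (Habs := Rabs_pos e). assert (Habs2 := pow2_abs e).
  nra.
Qed.

Lemma z0_sqr_le (r d11 d12 d21 d22 gamma phi1 phi2 : R) :
  0 <= d11 -> 0 <= d22 -> (d12 + d21) ^ 2 <= 4 * gamma ^ 2 * (d11 * d22) ->
  z0 r d12 d21 phi1 phi2 ^ 2 <= 4 * gamma ^ 2 * (zj r d11 phi1 * zj r d22 phi2).
Proof.
  intros H11 H22 He.
  replace (z0 r d12 d21 phi1 phi2 ^ 2)
    with (r ^ 2 * ((d12 + d21) ^ 2 * (sin phi1 ^ 2 * sin phi2 ^ 2))) by (unfold z0; ring).
  replace (4 * gamma ^ 2 * (zj r d11 phi1 * zj r d22 phi2))
    with (r ^ 2 * (4 * gamma ^ 2 * (d11 * d22) * (2 * (1 - cos phi1) * (2 * (1 - cos phi2)))))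
    by (unfold zj; ring).
  apply Rmult_le_compat_l; [nra |].
  apply Rmult_le_compat; [apply pow2_ge_0 | apply Rmult_le_pos; apply pow2_ge_0 | exact He |].
  apply Rmult_le_compat; [apply pow2_ge_0 | apply pow2_ge_0 | apply sin_sqr_le ..].
Qed.

Lemma sqrt_product_bounds (gamma z1 z2 w : R) :
  0 <= gamma -> z1 <= 0 -> z2 <= 0 -> w ^ 2 <= 4 * gamma ^ 2 * (z1 * z2) ->
  exists s, 0 <= s /\ z1 * z2 = s * s /\ 2 * s <= - (z1 + z2) /\
            - (2 * gamma * s) <= w <= 2 * gamma * s.
Proof.
  intros Hgamma H1 H2 Hw.
  assert (Hprod : 0 <= z1 * z2) by nra.
  exists (sqrt (z1 * z2)).
  assert (Hs := sqrt_sqrt _ Hprod). assert (Hs0 := sqrt_pos (z1 * z2)).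
  set (s := sqrt (z1 * z2)) in *.
  split; [exact Hs0 | split; [lra | split]].
  - assert (Hamgm := pow2_ge_0 (z1 - z2)).
    apply Rsqr_incr_0_var; unfold Rsqr; nra.
  - apply Rabs_le_between, Rsqr_incr_0_var; [| nra].
    rewrite <- Rsqr_abs. unfold Rsqr. nra.
Qed.

Lemma uncond_stable_of_spectral_bounds
    (a1 a2 b1 b2 bh1 bh2 bc1 bc2 theta d11 d12 d21 d22 gamma : R) :
  psd2 d11 d12 d21 d22 -> 0 <= gamma ->
  Rabs (d12 + d21) <= 2 * gamma * sqrt (d11 * d22) ->
  (forall z1 z2 w, z1 <= 0 -> z2 <= 0 -> w ^ 2 <= 4 * gamma ^ 2 * (z1 * z2) ->
     root_condition (rcoef a1 b1 bh1 bc1 theta w z1 z2)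
                    (rcoef a2 b2 bh2 bc2 theta w z1 z2)) ->
  uncond_stable a1 a2 b1 b2 bh1 bh2 bc1 bc2 theta d11 d12 d21 d22.
Proof.
  intros Hpsd Hgamma Hmixed Hspectral r phi1 phi2 Hr _ _. cbv zeta.
  destruct (psd2_diag_nonneg _ _ _ _ Hpsd) as [H11 H22].
  apply Hspectral; [apply zj_nonpos; lra .. |].
  apply z0_sqr_le; [assumption .. |].
  apply mixed_coef_sqr_le; [assumption | nra | assumption].
Qed.

Lemma cnlf_root_condition (gamma z1 z2 w : R) :
  0 <= gamma <= 1 -> z1 <= 0 -> z2 <= 0 -> w ^ 2 <= 4 * gamma ^ 2 * (z1 * z2) ->
  root_condition (rcoef 0 0 2 1 1 w z1 z2) (rcoef 1 1 0 1 1 w z1 z2).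
Proof.
  intros Hgamma H1 H2 Hw.
  destruct (sqrt_product_bounds gamma z1 z2 w ltac:(lra) H1 H2 Hw)
    as (s & Hs & Hss & Hx & Hwl & Hwu).
  assert (gamma * s <= s) by nra.
  apply root_condition_of_numerators; [lra | exact H1 | exact H2 | idtac ..].
  all: rewrite pfac_expand; unfold numerator; rewrite Hss; nra.
Qed.

Lemma mixed_combination_le (gamma theta s x w : R) :
  0 <= s -> 2 * s <= - x -> - (2 * gamma * s) <= w -> 1 / 2 <= theta ->
  - 2 * w + (4 * theta - 2) * x <= (4 + 4 * gamma - 8 * theta) * s.
Proof. intros Hs Hx Hw Htheta. nra. Qed.

Lemma bdf2_root_condition (gamma theta z1 z2 w : R) :
  0 <= gamma <= 1 -> 1 / 2 <= theta -> (gamma + 1) / (2 + 2 / sqrt 3) <= theta ->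
  z1 <= 0 -> z2 <= 0 -> w ^ 2 <= 4 * gamma ^ 2 * (z1 * z2) ->
  root_condition
    (rcoef (4/3) (4/3 - 2 * theta) (4/3) (4/3 - theta) theta w z1 z2)
    (rcoef (-(1/3)) (-(2/3) + theta) (-(2/3)) (-(2/3) + theta) theta w z1 z2).
Proof.
  intros Hgamma Htheta Hbound H1 H2 Hw.
  destruct (sqrt_product_bounds gamma z1 z2 w ltac:(lra) H1 H2 Hw)
    as (s & Hs & Hss & Hx & Hwl & Hwu).
  set (q := sqrt 3) in *.
  assert (Hq : q * q = 3) by (apply sqrt_sqrt; lra).
  assert (Hq0 : 0 < q) by (apply sqrt_lt_R0; lra).
  assert (Hbound' : 1 + gamma <= theta * (2 + 2 * q / 3)).
  { replace (2 * q / 3) with (2 / q) by (field_simplify_eq; lra).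
    apply (Rmult_le_reg_r (/ (2 + 2 / q))).
    - apply Rinv_0_lt_compat. assert (0 < 2 / q) by (apply Rdiv_lt_0_compat; lra). lra.
    - replace (theta * (2 + 2 / q) * / (2 + 2 / q)) with theta by (field; lra).
      unfold Rdiv in Hbound. lra. }
  (* Given theta (2 + 2 / sqrt 3) >= 1 + gamma, what is left to show is
     (2/3) (theta s sqrt 3 - 2)^2 >= 0. *)
  assert (Hsquare : 0 <= (theta * s * q - 2) ^ 2) by apply pow2_ge_0.
  assert (Hgap := mixed_combination_le gamma theta s (z1 + z2) w Hs Hx Hwl Htheta).
  assert (gamma * s <= s) by nra.
  apply root_condition_of_numerators; [lra | exact H1 | exact H2 | idtac ..].
  all: rewrite pfac_expand; unfold numerator; rewrite Hss; nra.
Qed.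

Lemma adams2_root_condition (gamma theta z1 z2 w : R) :
  0 <= gamma <= 1 -> 1 / 2 <= theta -> (gamma + 1) / 3 <= theta ->
  z1 <= 0 -> z2 <= 0 -> w ^ 2 <= 4 * gamma ^ 2 * (z1 * z2) ->
  root_condition
    (rcoef 1 (3/2 - 2 * theta) (3/2) (3/2 - theta) theta w z1 z2)
    (rcoef 0 (-(1/2) + theta) (-(1/2)) (-(1/2) + theta) theta w z1 z2).
Proof.
  intros Hgamma Htheta Hbound H1 H2 Hw.
  destruct (sqrt_product_bounds gamma z1 z2 w ltac:(lra) H1 H2 Hw)
    as (s & Hs & Hss & Hx & Hwl & Hwu).
  assert (Hsquare : 0 <= (theta * s - 1) ^ 2) by apply pow2_ge_0.
  assert (Hgap := mixed_combination_le gamma theta s (z1 + z2) w Hs Hx Hwl Htheta).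
  assert (gamma * s <= s) by nra.
  apply root_condition_of_numerators; [lra | exact H1 | exact H2 | idtac ..].
  all: rewrite pfac_expand; unfold numerator; rewrite Hss; nra.
Qed.

Theorem theorem2 :
  forall d11 d12 d21 d22 gamma : R,
    psd2 d11 d12 d21 d22 ->
    0 <= gamma <= 1 ->
    Rabs (d12 + d21) <= 2 * gamma * sqrt (d11 * d22) ->
    (* CNLF, theta = 1 *)
    uncond_stable 0 1 0 1 2 0 1 1 1 d11 d12 d21 d22 /\
    (* BDF2-type *)
    (forall theta : R,
       Rmax (1/2) ((gamma + 1) / (2 + 2 / sqrt 3)) <= theta ->
       uncond_stable (4/3) (-(1/3)) (4/3 - 2 * theta) (-(2/3) + theta)
                     (4/3) (-(2/3)) (4/3 - theta) (-(2/3) + theta) theta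
                     d11 d12 d21 d22) /\
    (* Adams2-type *)
    (forall theta : R,
       Rmax (1/2) ((gamma + 1) / 3) <= theta ->
       uncond_stable 1 0 (3/2 - 2 * theta) (-(1/2) + theta)
                     (3/2) (-(1/2)) (3/2 - theta) (-(1/2) + theta) theta
                     d11 d12 d21 d22).
Proof.
  intros d11 d12 d21 d22 gamma Hpsd Hgamma Hmixed.
  assert (Hgamma0 : 0 <= gamma) by lra.
  split; [| split; intros theta Htheta].
  - apply uncond_stable_of_spectral_bounds with (gamma := gamma); [assumption .. |].
    intros z1 z2 w. apply cnlf_root_condition, Hgamma.
  - apply uncond_stable_of_spectral_bounds with (gamma := gamma); [assumption .. |].
    intros z1 z2 w. apply bdf2_root_condition; [exact Hgamma | |].
    + exact (Rle_trans _ _ _ (Rmax_l _ _) Htheta).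
    + exact (Rle_trans _ _ _ (Rmax_r _ _) Htheta).
  - apply uncond_stable_of_spectral_bounds with (gamma := gamma); [assumption .. |].
    intros z1 z2 w. apply adams2_root_condition; [exact Hgamma | |].
    + exact (Rle_trans _ _ _ (Rmax_l _ _) Htheta).
    + exact (Rle_trans _ _ _ (Rmax_r _ _) Htheta).
Qed.
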